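(* For $z\in\{z\in\mathbb{C}:|\arg(z)|<\pi\}$, \[ {}_2F_2\left(\begin{matrix}1,&1\\3,&z+2\end{matrix};z\right)=\frac{2(z+1)}{z^2}\left(1+z-\frac{\gamma(z,z)}{z^{z-1}e^{-z}}\right). \] In particular, for every positive integer $n$, \[ {}_2F_2\left(\begin{matrix}1,&1\\3,&n+2\end{matrix};n\right)=\frac{2(n+1)}{n^2}\left(1+n-\frac{(n-1)!}{n^{n-1}}\left(e^n-\sum_{k=0}^{n-1}\frac{n^k}{k!}\right)\right). \]
   Context: ${}_pF_q$ denotes the generalized hypergeometric series $\sum_{k\ge0}\frac{(a_1)_k\cdots(a_p)_k}{(b_1)_k\cdots(b_q)_k}\frac{x^k}{k!}$, with $(a)_k$ the Pochhammer symbol. $\gamma(s,x)=\int_0^x t^{s-1}e^{-t}\,dt$ is the lower incomplete gamma function; $z^{z-1}$ uses the principal branch. *)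

From Stdlib Require Import Reals.
From Coquelicot Require Import Coquelicot.
Open Scope R_scope.

Definition Cexp (z : C) : C :=
  (exp (Re z) * cos (Im z), exp (Re z) * sin (Im z)).

(* |arg z| < pi  <->  z lies off the closed half-line (-oo, 0] *)
Definition in_slit_plane (z : C) : Prop := ~ (Im z = 0 /\ Re z <= 0).

(* principal argument, valid (values in (-pi,pi)) on the slit plane:
   arg z = 2 atan (Im z / (|z| + Re z)) since tan(theta/2) = sin/(1+cos). *)
Definition Carg (z : C) : R := 2 * atan (Im z / (Cmod z + Re z)).

Definition CLog (z : C) : C := (ln (Cmod z), Carg z).
Definition Cpowc (a b : C) : C := Cexp (b * CLog a)%C.

Fixpoint Cpown (x : C) (k : nat) : C :=
  match k with O => 1%C | S k' => (x * Cpown x k')%C end.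

Fixpoint poch (a : C) (k : nat) : C :=
  match k with O => 1%C | S k' => (poch a k' * (a + RtoC (INR k')))%C end.

Definition F22_term (a1 a2 b1 b2 x : C) (k : nat) : C :=
  (poch a1 k * poch a2 k / (poch b1 k * poch b2 k)
     * Cpown x k / RtoC (INR (Factorial.fact k)))%C.

(* Lower incomplete gamma, series form (DLMF 8.7.1):
   gamma(s,x) = x^s * sum_k (-x)^k / (k! (s+k)).
   For Re s > 0 this equals int_0^x t^(s-1) e^(-t) dt; it is the
   analytic continuation of that integral in s. *)
Definition lgamma_series_term (s x : C) (k : nat) : C :=
  (Cpown (- x) k / (RtoC (INR (Factorial.fact k)) * (s + RtoC (INR k))))%C.

Definition is_lower_gamma (s x g : C) : Prop :=
  exists S : C, is_series (lgamma_series_term s x) S /\ g = (Cpowc x s * S)%C.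

Fixpoint rpoch (a : R) (k : nat) : R :=
  match k with O => 1 | S k' => rpoch a k' * (a + INR k') end.
Definition F22_term_R (a1 a2 b1 b2 x : R) (k : nat) : R :=
  rpoch a1 k * rpoch a2 k / (rpoch b1 k * rpoch b2 k) * x ^ k / INR (Factorial.fact k).

(* Put T(s, x) = sum_k x^k / (s)_(k+1) (the terms are [lgamma_poch_term s x]).  The
   partial-fraction identity sum_(k <= n) C(n,k) (-1)^k / (s + k) = n! / (s)_(n+1) says that the
   Cauchy product of the series x^-s gamma(s, x) = sum_k (-x)^k / (k! (s + k)) with the
   exponential series is the series of T(s, x); hence gamma(z, z) = z^z e^-z T(z, z), and the
   quotient in the theorem is z T(z, z).
   With t_k = z^k / (z)_(k+1) and w_k = 2 z^k / ((k + 1) (z + 2)_k) (= [F22_tail z k]), the k-th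
   term of the 2F2 series is w_k - w_(k+1) - (2 (z + 1) / z) t_(k+2).  As
   w_k = 2 (z + 1) t_(k+1) / (k + 1) tends to 0, the sum is w_0 - (2 (z + 1) / z) (T - t_0 - t_1),
   which is the closed form.  For z = n a positive integer, (n)_(m+1) = (n + m)! / (n - 1)!, so
   T(n, n) is a rescaled tail of the exponential series. *)

From Stdlib Require Import Reals Lra Lia.
From Coquelicot Require Import Coquelicot.
Open Scope R_scope.

(** * Complex series through real and imaginary parts *)

Lemma filterlim_C_iff (f : nat -> C) (l : C) :
  filterlim f eventually (locally l) <->
  filterlim (fun n => Re (f n)) eventually (locally (Re l)) /\
  filterlim (fun n => Im (f n)) eventually (locally (Im l)).
Proof.
rewrite !filterlim_locally. split.
- intros H. split; intros eps; generalize (H eps); apply filter_imp; now intros n [].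
- intros [H1 H2] eps. generalize (filter_and _ _ (H1 eps) (H2 eps)).
  apply filter_imp. intros n [B1 B2]. now split.
Qed.

Lemma sum_n_Re (a : nat -> C) n : Re (sum_n a n) = sum_n (fun k => Re (a k)) n.
Proof. induction n; [now rewrite !sum_O|]. rewrite !sum_Sn. simpl. now rewrite <- IHn. Qed.

Lemma sum_n_Im (a : nat -> C) n : Im (sum_n a n) = sum_n (fun k => Im (a k)) n.
Proof. induction n; [now rewrite !sum_O|]. rewrite !sum_Sn. simpl. now rewrite <- IHn. Qed.

Lemma is_series_C_iff (a : nat -> C) (l : C) :
  is_series a l <->
  is_series (fun n => Re (a n)) (Re l) /\ is_series (fun n => Im (a n)) (Im l).
Proof.
unfold is_series. rewrite filterlim_C_iff.
split; intros [H1 H2]; split; eapply filterlim_ext; try eassumption;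
  intros n; cbv beta; now rewrite ?sum_n_Re, ?sum_n_Im.
Qed.

Lemma is_series_0_R : is_series (fun _ : nat => 0) 0.
Proof.
unfold is_series. apply (filterlim_ext (fun _ => 0)); [|apply filterlim_const].
intros n. rewrite sum_n_const. ring.
Qed.

Lemma is_series_RtoC (f : nat -> R) (l : R) :
  is_series f l -> is_series (fun n => RtoC (f n)) (RtoC l).
Proof. intros H. apply is_series_C_iff. split; [exact H | exact is_series_0_R]. Qed.

Lemma is_series_telescoping_R (w : nat -> R) :
  is_lim_seq w 0 -> is_series (fun k => w k - w (S k)) (w O).
Proof.
intros Hw. unfold is_series.
apply (filterlim_ext (fun n => w O - w (S n))).
- intros n. rewrite sum_n_Reals. induction n; simpl; [reflexivity|].
  rewrite <- IHn. ring.
- assert (L : is_lim_seq (fun n => w O - w (S n)) (w O - 0)).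
  { apply is_lim_seq_minus'; [apply is_lim_seq_const | now apply (is_lim_seq_incr_1 w)]. }
  now rewrite Rminus_0_r in L.
Qed.

Lemma is_series_telescoping (w : nat -> C) :
  filterlim w eventually (locally (RtoC 0)) -> is_series (fun k => w k - w (S k))%C (w O).
Proof.
rewrite filterlim_C_iff. intros [HR HI]. apply is_series_C_iff.
split; apply is_series_telescoping_R; assumption.
Qed.

Lemma is_series_C_terms_Cmod_0 (a : nat -> C) (l : C) :
  is_series a l -> is_lim_seq (fun n => Cmod (a n)) 0.
Proof.
intros H.
assert (Ha : filterlim a eventually (locally (RtoC 0))).
{ apply is_series_C_iff in H as [HR HI]. apply filterlim_C_iff. split;
  [exact (ex_series_lim_0 _ (ex_intro _ _ HR)) | exact (ex_series_lim_0 _ (ex_intro _ _ HI))]. }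
rewrite <- Cmod_0.
exact (filterlim_comp _ _ _ _ _ _ _ _ Ha
  (filterlim_norm (K := C_AbsRing) (V := C_NormedModule) (RtoC 0))).
Qed.

(* Restatements at types C and R of generic Coquelicot lemmas: [ring] and [field] do not
   recognise equalities stated at the carrier of a Coquelicot structure. *)
Lemma sum_n_C_Sn (a : nat -> C) n : (sum_n a (S n) : C) = (sum_n a n + a (S n))%C.
Proof. now rewrite sum_Sn. Qed.

Lemma sum_n_C_mult_l (c : C) (a : nat -> C) n :
  (sum_n (fun k => c * a k)%C n : C) = (c * sum_n a n)%C.
Proof. apply (sum_n_mult_l (K := C_Ring)). Qed.

Lemma sum_n_C_ext_loc (a b : nat -> C) N :
  (forall n, (n <= N)%nat -> a n = b n) -> (sum_n a N : C) = sum_n b N.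
Proof. apply sum_n_ext_loc. Qed.

Lemma is_series_ext_R (a b : nat -> R) (l : R) :
  (forall n, a n = b n) -> is_series a l -> is_series b l.
Proof. apply is_series_ext. Qed.

Lemma sum_n_binomial_S (g : nat -> C) n :
  (sum_n (fun k => RtoC (Binomial.C (S n) k) * g k)%C (S n) : C) =
  (sum_n (fun k => RtoC (Binomial.C n k) * g k) n +
   sum_n (fun k => RtoC (Binomial.C n k) * g (S k)) n)%C.
Proof.
assert (Hpartial : forall m, (m <= n)%nat ->
  (sum_n (fun k => RtoC (Binomial.C (S n) k) * g k)%C m : C) =
  (sum_n (fun k => RtoC (Binomial.C n k) * g k) m +
   match m with O => 0 | S m' => sum_n (fun k => RtoC (Binomial.C n k) * g (S k)) m' end)%C).
{ induction m as [|m IHm]; intros Hm.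
  - rewrite !sum_O, !C_n_0. simpl. ring.
  - rewrite !sum_n_C_Sn, IHm by lia.
    rewrite <- (pascal n m), RtoC_plus by lia.
    destruct m; rewrite ?sum_O, ?sum_n_C_Sn; ring. }
rewrite sum_n_C_Sn, Hpartial by lia. rewrite !C_n_n.
destruct n; rewrite ?sum_O, ?sum_n_C_Sn, ?C_n_n; ring.
Qed.

Lemma Cpown_add (a : C) m n : Cpown a (m + n) = (Cpown a m * Cpown a n)%C.
Proof. induction m; simpl; [ring|]. rewrite IHm. ring. Qed.

Lemma Cpown_mult (a b : C) n : Cpown (a * b) n = (Cpown a n * Cpown b n)%C.
Proof. induction n; simpl; [ring|]. rewrite IHn. ring. Qed.

Lemma Cpown_RtoC (x : R) n : Cpown (RtoC x) n = RtoC (x ^ n).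
Proof. induction n; simpl; [reflexivity|]. now rewrite IHn, RtoC_mult. Qed.

Lemma Cmod_Cpown (a : C) n : Cmod (Cpown a n) = Cmod a ^ n.
Proof. induction n; simpl; [apply Cmod_1|]. now rewrite Cmod_mult, IHn. Qed.

Lemma binomial_C (a b : C) n :
  (sum_n (fun k => RtoC (Binomial.C n k) * (Cpown a k * Cpown b (n - k)))%C n : C) =
  Cpown (a + b) n.
Proof.
induction n as [|n IHn].
- rewrite sum_O, C_n_0. simpl. ring.
- rewrite sum_n_binomial_S. change (Cpown (a + b) (S n)) with ((a + b) * Cpown (a + b) n)%C.
  rewrite <- IHn.
  rewrite Cmult_plus_distr_r, Cplus_comm, <- !sum_n_C_mult_l. f_equal;
  apply sum_n_C_ext_loc; intros k Hk.
  + simpl. ring.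
  + replace (S n - k)%nat with (S (n - k)) by lia. simpl. ring.
Qed.

Lemma INR_fact_RtoC_neq0 k : RtoC (INR (Factorial.fact k)) <> 0%C.
Proof. intros E. apply (INR_fact_neq_0 k). exact (f_equal Re E). Qed.

Definition exp_term (z : C) (n : nat) : C := (Cpown z n / RtoC (INR (Factorial.fact n)))%C.

Lemma sum_n_exp_terms_mult (a b : C) n :
  (sum_n (fun k => exp_term a k * exp_term b (n - k))%C n : C) = exp_term (a + b) n.
Proof.
unfold exp_term. rewrite <- binomial_C. unfold Cdiv. rewrite Cmult_comm, <- sum_n_C_mult_l.
apply sum_n_C_ext_loc. intros k Hk. unfold Binomial.C.
rewrite RtoC_div, !RtoC_mult by (apply Rmult_integral_contrapositive; split; apply INR_fact_neq_0).
field. repeat split; apply INR_fact_RtoC_neq0.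
Qed.

(** * The exponential series *)

Lemma im_le_Cmod (c : C) : Rabs (Im c) <= Cmod c.
Proof.
unfold Cmod. rewrite <- sqrt_Rsqr_abs. apply sqrt_le_1_alt. unfold Rsqr, Im. nra.
Qed.

Lemma ex_series_Re_Im_of_Cmod (a : nat -> C) :
  ex_series (fun n => Cmod (a n)) ->
  ex_series (fun n => Rabs (Re (a n))) /\ ex_series (fun n => Rabs (Im (a n))).
Proof.
intros H. split; refine (ex_series_le (K := R_AbsRing) (V := R_CompleteNormedModule) _ _ _ H);
  intros n; unfold norm; simpl; rewrite Rabs_Rabsolu; [apply re_le_Cmod | apply im_le_Cmod].
Qed.

Lemma is_series_mult_C (a b : nat -> C) (la lb : C) :
  is_series a la -> is_series b lb ->
  ex_series (fun n => Cmod (a n)) -> ex_series (fun n => Cmod (b n)) ->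
  is_series (fun n => sum_n (fun k => a k * b (n - k)%nat)%C n) (la * lb)%C.
Proof.
rewrite !is_series_C_iff. intros [Ra Ia] [Rb Ib] Ea Eb.
destruct (ex_series_Re_Im_of_Cmod a Ea) as [ERa EIa].
destruct (ex_series_Re_Im_of_Cmod b Eb) as [ERb EIb].
pose proof (is_series_mult _ _ _ _ Ra Rb ERa ERb) as RR.
pose proof (is_series_mult _ _ _ _ Ia Ib EIa EIb) as II.
pose proof (is_series_mult _ _ _ _ Ra Ib ERa EIb) as RI.
pose proof (is_series_mult _ _ _ _ Ia Rb EIa ERb) as IR.
split.
- eapply is_series_ext; [|exact (is_series_minus _ _ _ _ RR II)].
  intros n. rewrite sum_n_Re, sum_n_Reals. simpl. now rewrite minus_sum.
- eapply is_series_ext; [|exact (is_series_plus _ _ _ _ RI IR)].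
  intros n. rewrite sum_n_Im, sum_n_Reals. simpl. now rewrite plus_sum.
Qed.

Lemma ex_series_Cmod_exp_term (z : C) : ex_series (fun n => Cmod (exp_term z n)).
Proof.
exists (exp (Cmod z)). eapply is_series_ext; [|exact (is_exp_Reals (Cmod z))].
intros n. unfold exp_term. rewrite Cmod_div by apply INR_fact_RtoC_neq0.
rewrite Cmod_Cpown, Cmod_R, pow_n_pow, Rabs_right by (apply Rle_ge, pos_INR).
reflexivity.
Qed.

Lemma is_pseries_at_1 (a : nat -> R) (l : R) : is_pseries a 1 l <-> is_series a l.
Proof.
assert (E : forall n, scal (pow_n 1 n) (a n) = a n).
{ intros n. rewrite pow_n_pow, pow1. change (1 * a n = a n). ring. }
split; apply is_series_ext; intros n; [|symmetry]; apply E.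
Qed.

Lemma is_series_even_odd (a : nat -> R) (l1 l2 : R) :
  is_series (fun m => a (2 * m)%nat) l1 -> is_series (fun m => a (2 * m + 1)%nat) l2 ->
  is_series a (l1 + l2).
Proof.
rewrite <- !is_pseries_at_1. intros H1 H2.
rewrite <- (Rmult_1_l l2). apply is_pseries_odd_even; now rewrite pow1.
Qed.

Lemma is_series_cos (y : R) :
  is_series (fun m => (-1) ^ m * y ^ (2 * m) / INR (Factorial.fact (2 * m))) (cos y).
Proof.
unfold cos. destruct (exist_cos (Rsqr y)) as [l Hl]. apply is_series_Reals in Hl.
eapply is_series_ext_R; [|exact Hl]. intros n.
unfold cos_n, Rsqr. rewrite pow_mult. simpl (y ^ 2). rewrite Rmult_1_r. field. apply INR_fact_neq_0.
Qed.

Lemma is_series_sin (y : R) :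
  is_series (fun m => (-1) ^ m * y ^ (2 * m + 1) / INR (Factorial.fact (2 * m + 1))) (sin y).
Proof.
unfold sin. destruct (exist_sin (Rsqr y)) as [l Hl]. apply is_series_Reals in Hl.
apply (is_series_scal (K := R_AbsRing) y) in Hl.
eapply is_series_ext_R; [|exact Hl]. intros n.
change (scal y ?x) with (y * x). unfold sin_n, Rsqr. rewrite pow_add, pow_mult.
simpl (y ^ 2). simpl (y ^ 1). rewrite !Rmult_1_r. field. apply INR_fact_neq_0.
Qed.

Lemma Cpown_imaginary (y : R) m :
  Cpown (0, y) (2 * m) = RtoC ((-1) ^ m * y ^ (2 * m)) /\
  Cpown (0, y) (2 * m + 1) = ((0, (-1) ^ m * y ^ (2 * m + 1)) : C).
Proof.
induction m as [|m [Heven Hodd]].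
- split; apply injective_projections; simpl; ring.
- replace (2 * S m)%nat with (S (S (2 * m))) by lia.
  replace (S (S (2 * m)) + 1)%nat with (S (S (2 * m + 1))) by lia.
  change (Cpown (0, y) (S (S ?k))) with ((0, y) * ((0, y) * Cpown (0, y) k))%C.
  change (?x ^ S (S ?k)) with (x * (x * x ^ k)).
  rewrite Heven, Hodd. split; apply injective_projections; simpl; ring.
Qed.

Lemma exp_term_imaginary (y : R) m :
  exp_term (0, y) (2 * m) = RtoC ((-1) ^ m * y ^ (2 * m) / INR (Factorial.fact (2 * m))) /\
  exp_term (0, y) (2 * m + 1) =
    ((0, (-1) ^ m * y ^ (2 * m + 1) / INR (Factorial.fact (2 * m + 1))) : C).
Proof.
unfold exp_term. destruct (Cpown_imaginary y m) as [-> ->].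
split; apply injective_projections; simpl; field; apply INR_fact_neq_0.
Qed.

Lemma is_series_cis (y : R) : is_series (exp_term (0, y)) ((cos y, sin y) : C).
Proof.
apply is_series_C_iff. split.
- replace (Re (cos y, sin y)) with (cos y + 0) by (simpl; ring). apply is_series_even_odd.
  + eapply is_series_ext_R; [|exact (is_series_cos y)].
    intros m. now rewrite (proj1 (exp_term_imaginary y m)).
  + eapply is_series_ext_R; [|exact is_series_0_R].
    intros m. now rewrite (proj2 (exp_term_imaginary y m)).
- replace (Im (cos y, sin y)) with (0 + sin y) by (simpl; ring). apply is_series_even_odd.
  + eapply is_series_ext_R; [|exact is_series_0_R].
    intros m. now rewrite (proj1 (exp_term_imaginary y m)).
  + eapply is_series_ext_R; [|exact (is_series_sin y)].
    intros m. now rewrite (proj2 (exp_term_imaginary y m)).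
Qed.

Lemma is_series_exp_term_RtoC (x : R) : is_series (exp_term (RtoC x)) (RtoC (exp x)).
Proof.
eapply is_series_ext; [|exact (is_series_RtoC _ _ (is_exp_Reals x))].
intros n. unfold exp_term. rewrite Cpown_RtoC, pow_n_pow.
change (scal ?a ?b) with (a * b). now rewrite RtoC_mult, RtoC_inv by apply INR_fact_neq_0.
Qed.

Lemma is_series_exp_term (z : C) : is_series (exp_term z) (Cexp z).
Proof.
destruct z as [x y].
replace (Cexp (x, y)) with (RtoC (exp x) * (cos y, sin y))%C
  by (apply injective_projections; simpl; ring).
eapply is_series_ext; [|exact (is_series_mult_C _ _ _ _ (is_series_exp_term_RtoC x)
  (is_series_cis y) (ex_series_Cmod_exp_term _) (ex_series_Cmod_exp_term _))].
intros n. cbv beta. rewrite sum_n_exp_terms_mult.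
now replace (RtoC x + (0, y))%C with ((x, y) : C) by (apply injective_projections; simpl; ring).
Qed.

Lemma Cexp_add (a b : C) : Cexp (a + b) = (Cexp a * Cexp b)%C.
Proof.
unfold Cexp. apply injective_projections; simpl;
  rewrite exp_plus, ?cos_plus, ?sin_plus; unfold Re, Im; ring.
Qed.

Lemma Cexp_opp_mult (a : C) : (Cexp (- a) * Cexp a)%C = 1%C.
Proof.
rewrite <- Cexp_add.
replace (- a + a)%C with (RtoC 0) by (apply injective_projections; simpl; ring).
unfold Cexp. simpl. rewrite exp_0, cos_0, sin_0. apply injective_projections; simpl; ring.
Qed.

Lemma Cexp_neq0 (a : C) : Cexp a <> 0%C.
Proof. intros E. apply C1_nz. rewrite <- (Cexp_opp_mult a), E. ring. Qed.

Lemma cos_2atan (u : R) : cos (2 * atan u) = (1 - u²) / (1 + u²).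
Proof.
assert (Hq : 0 < 1 + u²) by (pose proof (Rle_0_sqr u); lra).
rewrite cos_2a_cos, cos_atan. unfold Rdiv.
rewrite Rmult_1_l, Rmult_assoc, <- Rinv_mult, sqrt_sqrt by lra. field. lra.
Qed.

Lemma sin_2atan (u : R) : sin (2 * atan u) = 2 * u / (1 + u²).
Proof.
assert (Hq : 0 < 1 + u²) by (pose proof (Rle_0_sqr u); lra).
rewrite sin_2a, sin_atan, cos_atan. unfold Rdiv.
replace (2 * (u * / sqrt (1 + u²)) * (1 * / sqrt (1 + u²)))
  with (2 * u * / (sqrt (1 + u²) * sqrt (1 + u²))) by (rewrite Rinv_mult; ring).
now rewrite sqrt_sqrt by lra.
Qed.

Lemma slit_plane_Cmod_add_Re_pos (z : C) : in_slit_plane z -> 0 < Cmod z + Re z.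
Proof.
intros Hz. pose proof (Cmod_ge_0 z). pose proof (Cmod2_alt z).
destruct (Req_dec (Im z) 0) as [Hy|Hy].
- assert (0 < Re z) by (destruct (Rle_lt_dec (Re z) 0); [now exfalso; apply Hz | lra]). lra.
- pose proof (Rsqr_pos_lt _ Hy). unfold Rsqr in *. nra.
Qed.

Lemma Cexp_CLog (z : C) : in_slit_plane z -> Cexp (CLog z) = z.
Proof.
intros Hz. pose proof (slit_plane_Cmod_add_Re_pos z Hz) as Hrx.
assert (Hr2 : Cmod z ^ 2 = Re z ^ 2 + Im z ^ 2) by apply Cmod2_alt.
assert (Hr : 0 < Cmod z).
{ apply Cmod_gt_0. intros ->. apply Hz. simpl. split; lra. }
destruct z as [x y]. unfold Cexp, CLog, Carg. simpl Re in *. simpl Im in *.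
rewrite exp_ln, cos_2atan, sin_2atan by exact Hr.
set (r := Cmod (x, y)) in *.
assert (Hy2 : y ^ 2 = r ^ 2 - x ^ 2) by lra.
assert (Hq : (r + x) * (r + x) + y * y <> 0) by nra.
apply injective_projections; simpl; unfold Rsqr; field_simplify_eq; try (split; lra).
- rewrite Hy2. ring.
- replace (y ^ 3) with (y * y ^ 2) by ring. rewrite Hy2. ring.
Qed.

(** * Pochhammer symbols and the lower incomplete gamma function *)

Definition off_nonpos_integers (w : C) : Prop := forall k : nat, (w + RtoC (INR k))%C <> 0%C.

Lemma slit_plane_shift_Cmod_lower_bound (z : C) :
  in_slit_plane z -> exists d, 0 < d /\ forall k, d <= Cmod (z + RtoC (INR k)).
Proof.
intros Hz. exists (Rmax (Rabs (Im z)) (Re z)). split.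
- destruct (Req_dec (Im z) 0) as [Hy|Hy].
  + assert (0 < Re z) by (destruct (Rle_lt_dec (Re z) 0); [now exfalso; apply Hz | lra]).
    eapply Rlt_le_trans; [|apply Rmax_r]. assumption.
  + eapply Rlt_le_trans; [|apply Rmax_l]. now apply Rabs_pos_lt.
- intros k. pose proof (pos_INR k). apply Rmax_lub.
  + pose proof (im_le_Cmod (z + RtoC (INR k))) as Him. simpl in Him. now rewrite Rplus_0_r in Him.
  + pose proof (re_le_Cmod (z + RtoC (INR k))). pose proof (Rle_abs (Re (z + RtoC (INR k)))).
    unfold Re in *. simpl in *. lra.
Qed.

Lemma slit_plane_off_nonpos_integers (z : C) : in_slit_plane z -> off_nonpos_integers z.
Proof.
intros Hz k E. destruct (slit_plane_shift_Cmod_lower_bound z Hz) as [d [Hd Hb]].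
specialize (Hb k). rewrite E, Cmod_0 in Hb. lra.
Qed.

Lemma poch_S_l (w : C) m : poch w (S m) = (w * poch (w + 1) m)%C.
Proof.
induction m as [|m IHm]; [simpl; ring|].
change (poch w (S (S m))) with (poch w (S m) * (w + RtoC (INR (S m))))%C.
rewrite IHm. simpl poch. rewrite S_INR, RtoC_plus. ring.
Qed.

Lemma poch_neq0 (w : C) m : off_nonpos_integers w -> poch w m <> 0%C.
Proof. intros H. induction m; simpl; [apply C1_nz | now apply Cmult_neq_0]. Qed.

Lemma off_nonpos_integers_neq0 (w : C) : off_nonpos_integers w -> w <> 0%C.
Proof. intros H ->. apply (H O). simpl. ring. Qed.

Lemma off_nonpos_integers_add1 (w : C) :
  off_nonpos_integers w -> off_nonpos_integers (w + 1)%C.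
Proof.
intros H k. replace (w + 1 + RtoC (INR k))%C with (w + RtoC (INR (S k)))%C; [apply H|].
rewrite S_INR, RtoC_plus. ring.
Qed.

Lemma sum_n_binomial_partial_fractions n : forall s : C,
  off_nonpos_integers s ->
  (sum_n (fun k => RtoC (Binomial.C n k) * (Cpown (-1) k / (s + RtoC (INR k))))%C n : C)
  = (RtoC (INR (Factorial.fact n)) / poch s (S n))%C.
Proof.
induction n as [|n IHn]; intros s H; pose proof (off_nonpos_integers_neq0 s H) as Hs.
- rewrite sum_O, C_n_0. simpl. field. exact Hs.
- pose proof (off_nonpos_integers_add1 s H) as H1.
  assert (Hshift :
    (sum_n (fun k => RtoC (Binomial.C n k) * (Cpown (-1) (S k) / (s + RtoC (INR (S k)))))%C n
     : C) =
    ((-1) * sum_n (fun k => RtoC (Binomial.C n k) * (Cpown (-1) k / (s + 1 + RtoC (INR k)))) n)%C).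
  { rewrite <- sum_n_C_mult_l. apply sum_n_C_ext_loc. intros k _. simpl Cpown.
    rewrite S_INR, RtoC_plus.
    replace (s + (RtoC (INR k) + 1))%C with (s + 1 + RtoC (INR k))%C by ring.
    unfold Cdiv. ring. }
  rewrite sum_n_binomial_S, IHn, Hshift, (IHn _ H1) by exact H.
  rewrite (poch_S_l s (S n)), (poch_S_l s n).
  change (poch (s + 1) (S n)) with (poch (s + 1) n * (s + 1 + RtoC (INR n)))%C.
  pose proof (poch_neq0 (s + 1) n H1). pose proof (H1 n).
  rewrite fact_simpl, mult_INR, S_INR, RtoC_mult, RtoC_plus.
  field. repeat split; assumption.
Qed.

Definition lgamma_poch_term (s x : C) (k : nat) : C := (Cpown x k / poch s (S k))%C.

Lemma sum_n_lgamma_exp_terms (s x : C) n :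
  off_nonpos_integers s ->
  (sum_n (fun k => lgamma_series_term s x k * exp_term x (n - k))%C n : C) =
  lgamma_poch_term s x n.
Proof.
intros H. pose proof (poch_neq0 s (S n) H).
transitivity (exp_term x n *
  sum_n (fun k => RtoC (Binomial.C n k) * (Cpown (-1) k / (s + RtoC (INR k)))) n)%C.
2:{ rewrite sum_n_binomial_partial_fractions by exact H. unfold exp_term, lgamma_poch_term.
    field. split; [assumption | apply INR_fact_RtoC_neq0]. }
rewrite <- sum_n_C_mult_l. apply sum_n_C_ext_loc. intros k Hk.
unfold lgamma_series_term, exp_term.
replace (- x)%C with ((-1) * x)%C by ring. rewrite Cpown_mult.
replace n with (k + (n - k))%nat at 3 by lia. rewrite Cpown_add.
unfold Binomial.C.
rewrite RtoC_div, !RtoC_mult by (apply Rmult_integral_contrapositive; split; apply INR_fact_neq_0).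
pose proof (H k).
field. repeat split; try assumption; apply INR_fact_RtoC_neq0.
Qed.

Lemma ex_series_Cmod_lgamma_series_term (s x : C) :
  in_slit_plane s -> ex_series (fun k => Cmod (lgamma_series_term s x k)).
Proof.
intros Hs. destruct (slit_plane_shift_Cmod_lower_bound s Hs) as [d [Hd Hb]].
refine (ex_series_le (K := R_AbsRing) (V := R_CompleteNormedModule) _
  (fun k => Cmod (exp_term (- x) k) * / d) _ (ex_series_scal_r _ _ (ex_series_Cmod_exp_term _))).
intros k. unfold norm. simpl. rewrite Rabs_pos_eq by apply Cmod_ge_0.
pose proof (slit_plane_off_nonpos_integers s Hs k).
replace (lgamma_series_term s x k) with (exp_term (- x) k / (s + RtoC (INR k)))%C.
2:{ unfold lgamma_series_term, exp_term. field. split; [assumption | apply INR_fact_RtoC_neq0]. }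
rewrite Cmod_div by assumption. apply Rmult_le_compat_l; [apply Cmod_ge_0|].
now apply Rinv_le_contravar.
Qed.

Lemma is_series_lgamma_poch_term (s x S : C) :
  in_slit_plane s -> is_series (lgamma_series_term s x) S ->
  is_series (lgamma_poch_term s x) (S * Cexp x)%C.
Proof.
intros Hs HS. eapply is_series_ext;
  [|exact (is_series_mult_C _ _ _ _ HS (is_series_exp_term x)
             (ex_series_Cmod_lgamma_series_term s x Hs) (ex_series_Cmod_exp_term x))].
intros n. apply sum_n_lgamma_exp_terms, slit_plane_off_nonpos_integers, Hs.
Qed.

(** * Telescoping the 2F2 series *)

Lemma RtoC_2 : RtoC 2 = (1 + 1)%C.
Proof. apply injective_projections; simpl; ring. Qed.

Lemma poch_1 k : poch 1%C k = RtoC (INR (Factorial.fact k)).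
Proof.
induction k as [|k IHk]; [reflexivity|].
change (poch 1%C (S k)) with (poch 1%C k * (1 + RtoC (INR k)))%C.
rewrite IHk, fact_simpl, mult_INR, S_INR, RtoC_mult, RtoC_plus. ring.
Qed.

Lemma poch_3 k : (poch (RtoC 3) k * (1 + 1))%C = RtoC (INR (Factorial.fact (S (S k)))).
Proof.
induction k as [|k IHk]; [apply injective_projections; simpl; ring|].
change (poch (RtoC 3) (S k)) with (poch (RtoC 3) k * (RtoC 3 + RtoC (INR k)))%C.
transitivity (poch (RtoC 3) k * (1 + 1) * (RtoC 3 + RtoC (INR k)))%C; [ring|].
rewrite IHk, (fact_simpl (S (S k))), mult_INR, <- RtoC_plus, <- RtoC_mult, !S_INR.
f_equal. ring.
Qed.

Lemma poch_SS (z : C) m : poch z (S (S m)) = (z * ((z + 1) * poch (z + RtoC 2) m))%C.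
Proof.
rewrite !poch_S_l, RtoC_2. now replace (z + 1 + 1)%C with (z + (1 + 1))%C by ring.
Qed.

Lemma off_nonpos_integers_add2 (z : C) :
  off_nonpos_integers z -> off_nonpos_integers (z + RtoC 2)%C.
Proof.
intros H k. rewrite RtoC_2. replace (z + (1 + 1))%C with (z + 1 + 1)%C by ring.
now apply off_nonpos_integers_add1, off_nonpos_integers_add1.
Qed.

Lemma INR_S_RtoC_neq0 k : (RtoC (INR k) + 1)%C <> 0%C.
Proof.
rewrite <- RtoC_plus. intros E. apply (f_equal Re) in E. simpl in E.
pose proof (pos_INR k). lra.
Qed.

Definition F22_tail (z : C) (k : nat) : C :=
  ((1 + 1) * Cpown z k / (poch (z + RtoC 2) k * (RtoC (INR k) + 1)))%C.

Lemma F22_tail_lgamma_poch_term (z : C) k :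
  off_nonpos_integers z ->
  F22_tail z k = ((1 + 1) * (z + 1) * lgamma_poch_term z z (S k) / (RtoC (INR k) + 1))%C.
Proof.
intros H. unfold F22_tail, lgamma_poch_term. rewrite poch_SS.
pose proof (poch_neq0 _ k (off_nonpos_integers_add2 z H)).
pose proof (off_nonpos_integers_neq0 z H).
pose proof (off_nonpos_integers_neq0 _ (off_nonpos_integers_add1 z H)).
pose proof (INR_S_RtoC_neq0 k). simpl Cpown.
field. repeat split; assumption.
Qed.

Lemma F22_term_telescoping (z : C) k :
  off_nonpos_integers z ->
  F22_term 1%C 1%C (RtoC 3) (z + RtoC 2)%C z k =
  (F22_tail z k - F22_tail z (S k) - (1 + 1) * (z + 1) / z * lgamma_poch_term z z (S (S k)))%C.
Proof.
intros H.
assert (Hpoch3 : poch (RtoC 3) k = (RtoC (INR (Factorial.fact (S (S k)))) / (1 + 1))%C).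
{ rewrite <- poch_3. field. }
unfold F22_term, F22_tail, lgamma_poch_term. rewrite poch_1, Hpoch3.
change (poch (z + RtoC 2) (S k)) with (poch (z + RtoC 2) k * (z + RtoC 2 + RtoC (INR k)))%C.
change (poch z (S (S (S k)))) with (poch z (S (S k)) * (z + RtoC (INR (S (S k)))))%C.
rewrite poch_SS. simpl Cpown.
pose proof (off_nonpos_integers_neq0 z H).
pose proof (off_nonpos_integers_neq0 _ (off_nonpos_integers_add1 z H)). pose proof (H (S (S k))).
pose proof (poch_neq0 _ k (off_nonpos_integers_add2 z H)).
pose proof (INR_S_RtoC_neq0 k). pose proof (INR_S_RtoC_neq0 (S k)).
pose proof (INR_fact_RtoC_neq0 k).
rewrite !fact_simpl, !mult_INR, !RtoC_mult, RtoC_2 in *. rewrite !S_INR, !RtoC_plus in *.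
simpl INR in *.
field. repeat split; cbv beta; assumption.
Qed.

Lemma F22_tail_lim_0 (z T : C) :
  off_nonpos_integers z ->
  is_series (lgamma_poch_term z z) T ->
  filterlim (F22_tail z) eventually (locally (RtoC 0)).
Proof.
intros H HT. apply (filterlim_norm_zero (K := C_AbsRing) (V := C_NormedModule)).
change (is_lim_seq (fun n => Cmod (F22_tail z n)) 0).
set (c := ((1 + 1) * (z + 1))%C).
apply (is_lim_seq_le_le (fun _ => 0) _ (fun n => Cmod c * Cmod (lgamma_poch_term z z (S n)))).
- intros n. split; [apply Cmod_ge_0|].
  rewrite F22_tail_lgamma_poch_term by exact H. fold c.
  rewrite Cmod_div by apply INR_S_RtoC_neq0. rewrite Cmod_mult.
  rewrite <- RtoC_plus, Cmod_R, Rabs_pos_eq by (pose proof (pos_INR n); lra).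
  pose proof (pos_INR n).
  pose proof (Rmult_le_pos _ _ (Cmod_ge_0 c) (Cmod_ge_0 (lgamma_poch_term z z (S n)))).
  apply Rle_div_l; nra.
- apply is_lim_seq_const.
- replace (Finite 0) with (Rbar_mult (Cmod c) 0) by (simpl; f_equal; ring).
  apply is_lim_seq_scal_l, (is_lim_seq_incr_1 (fun n => Cmod (lgamma_poch_term z z n))).
  exact (is_series_C_terms_Cmod_0 _ _ HT).
Qed.

Lemma is_series_F22 (z T : C) :
  off_nonpos_integers z ->
  is_series (lgamma_poch_term z z) T ->
  is_series (F22_term 1%C 1%C (RtoC 3) (z + RtoC 2)%C z)
    (RtoC 2 * (z + 1) / (z * z) * (1 + z - z * T))%C.
Proof.
intros H HT.
pose proof (off_nonpos_integers_neq0 z H) as Hz.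
pose proof (off_nonpos_integers_neq0 _ (off_nonpos_integers_add1 z H)) as Hz1.
set (t := lgamma_poch_term z z) in *.
set (c := ((1 + 1) * (z + 1) / z)%C).
assert (Hshift : is_series (fun k => t (S (S k))) (T - (t O + t 1%nat))%C).
{ assert (E : T = plus (T - (t O + t 1%nat))%C (sum_n t (pred 2))).
  { simpl pred. rewrite sum_n_C_Sn, sum_O.
    change (T = T - (t O + t 1%nat) + (t O + t 1%nat))%C. ring. }
  rewrite E in HT. exact (is_series_incr_n t 2 _ (Nat.lt_0_succ 1) HT). }
pose proof (is_series_minus _ _ _ _ (is_series_telescoping _ (F22_tail_lim_0 z T H HT))
  (is_series_scal_l (K := C_AbsRing) c _ _ Hshift)) as M.
replace (RtoC 2 * (z + 1) / (z * z) * (1 + z - z * T))%C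
  with (F22_tail z O - c * (T - (t O + t 1%nat)))%C.
- eapply is_series_ext; [|exact M]. intros k. symmetry. now apply F22_term_telescoping.
- unfold F22_tail, t, lgamma_poch_term, c. simpl. rewrite RtoC_2.
  field. repeat split; assumption.
Qed.

Lemma Cpowc_pred_exponent (z b : C) : in_slit_plane z -> Cpowc z b = (Cpowc z (b - 1) * z)%C.
Proof.
intros Hz. unfold Cpowc. rewrite <- (Cexp_CLog z Hz) at 3. rewrite <- Cexp_add. f_equal. ring.
Qed.

Lemma F22_slit_plane (z : C) : in_slit_plane z ->
  exists g : C, is_lower_gamma z z g /\
    is_series (F22_term 1%C 1%C (RtoC 3) (z + RtoC 2)%C z)
      (RtoC 2 * (z + 1) / (z * z) * (1 + z - g / (Cpowc z (z - 1) * Cexp (- z))))%C.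
Proof.
intros Hz.
destruct (ex_series_le (K := C_AbsRing) (V := C_CompleteNormedModule) (lgamma_series_term z z) _
  (fun n => Rle_refl _) (ex_series_Cmod_lgamma_series_term z z Hz)) as [S HS].
exists (Cpowc z z * S)%C. split; [now exists S|].
replace ((Cpowc z z * S) / (Cpowc z (z - 1) * Cexp (- z)))%C with (z * (S * Cexp z))%C.
- exact (is_series_F22 z _ (slit_plane_off_nonpos_integers z Hz)
    (is_series_lgamma_poch_term z z S Hz HS)).
- assert (HE : Cexp z = (/ Cexp (- z))%C).
  { transitivity (Cexp (- z) * Cexp z / Cexp (- z))%C; [field; apply Cexp_neq0|].
    rewrite Cexp_opp_mult. unfold Cdiv. ring. }
  rewrite (Cpowc_pred_exponent z z Hz), HE. unfold Cpowc.
  field. split; apply Cexp_neq0.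
Qed.

(** * Integer arguments *)

Lemma rpoch_pos (a : R) k : 0 < a -> 0 < rpoch a k.
Proof.
intros Ha. induction k; simpl; [lra|].
pose proof (pos_INR k). apply Rmult_lt_0_compat; lra.
Qed.

Lemma poch_RtoC (a : R) k : poch (RtoC a) k = RtoC (rpoch a k).
Proof. induction k; simpl; [reflexivity|]. now rewrite IHk, RtoC_mult, RtoC_plus. Qed.

Lemma rpoch_nat_fact (p m : nat) :
  rpoch (INR (S p)) m * INR (Factorial.fact p) = INR (Factorial.fact (p + m)).
Proof.
induction m as [|m IHm]; [now rewrite Rmult_1_l, Nat.add_0_r|].
change (rpoch ?a (S m)) with (rpoch a m * (a + INR m)).
replace (rpoch (INR (S p)) m * (INR (S p) + INR m) * INR (Factorial.fact p))
  with (rpoch (INR (S p)) m * INR (Factorial.fact p) * (INR (S p) + INR m)) by ring.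
rewrite IHm, Nat.add_succ_r, fact_simpl, mult_INR, <- plus_INR, Rmult_comm. reflexivity.
Qed.

Lemma is_series_rpoch_nat (p : nat) (x : R) : x <> 0 ->
  is_series (fun m => x ^ m / rpoch (INR (S p)) (S m))
    (INR (Factorial.fact p) / x ^ S p *
       (exp x - sum_f_R0 (fun k => x ^ k / INR (Factorial.fact k)) p)).
Proof.
intros Hx.
set (tail := exp x - sum_f_R0 (fun k => x ^ k / INR (Factorial.fact k)) p).
assert (Hexp : is_series (fun k => x ^ k / INR (Factorial.fact k)) (exp x)).
{ eapply is_series_ext_R; [|exact (is_exp_Reals x)]. intros n. now rewrite pow_n_pow. }
replace (exp x) with (plus tail (sum_n (fun k => x ^ k / INR (Factorial.fact k)) (pred (S p))))
  in Hexp by (rewrite sum_n_Reals; unfold tail; simpl; change (plus ?a ?b) with (a + b); ring).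
apply (is_series_incr_n (K := R_AbsRing) (V := R_NormedModule) _ (S p) _ (Nat.lt_0_succ p))
  in Hexp.
apply (is_series_scal_l (K := R_AbsRing) (INR (Factorial.fact p) / x ^ S p)) in Hexp.
eapply is_series_ext_R; [|exact Hexp]. intros m. change (scal ?a ?b) with (a * b).
pose proof (rpoch_nat_fact p (S m)) as Hfact. rewrite <- Nat.add_succ_comm in Hfact.
pose proof (rpoch_pos (INR (S p)) (S m) ltac:(apply lt_0_INR; lia)).
cbv beta. rewrite <- Hfact, pow_add. field.
repeat split; try lra; try apply pow_nonzero; try apply INR_fact_neq_0; assumption.
Qed.

Lemma F22_term_RtoC (a1 a2 b1 b2 x : R) k :
  rpoch b1 k <> 0 -> rpoch b2 k <> 0 ->
  F22_term (RtoC a1) (RtoC a2) (RtoC b1) (RtoC b2) (RtoC x) k =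
  RtoC (F22_term_R a1 a2 b1 b2 x k).
Proof.
intros H1 H2. pose proof (INR_fact_neq_0 k).
pose proof (Rmult_integral_contrapositive_currified _ _ H1 H2).
unfold F22_term, F22_term_R. rewrite !poch_RtoC, Cpown_RtoC.
repeat first [rewrite RtoC_mult | rewrite RtoC_div by assumption]. reflexivity.
Qed.

Lemma F22_nat (n : nat) : (1 <= n)%nat ->
  is_series (F22_term_R 1 1 3 (INR n + 2) (INR n))
    (2 * (INR n + 1) / (INR n ^ 2)
       * (1 + INR n - INR (Factorial.fact (n - 1)) / (INR n ^ (n - 1))
            * (exp (INR n) - sum_f_R0 (fun k => INR n ^ k / INR (Factorial.fact k)) (n - 1)))).
Proof.
intros Hn. destruct n as [|p]; [lia|]. replace (S p - 1)%nat with p by lia.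
set (x := INR (S p)). assert (Hx : 0 < x) by (apply lt_0_INR; lia).
set (T := INR (Factorial.fact p) / x ^ S p *
            (exp x - sum_f_R0 (fun k => x ^ k / INR (Factorial.fact k)) p)).
assert (Hslit : in_slit_plane (RtoC x)) by (intros [_ Hle]; simpl in Hle; lra).
assert (HT : is_series (lgamma_poch_term (RtoC x) (RtoC x)) (RtoC T)).
{ eapply is_series_ext; [|exact (is_series_RtoC _ _ (is_series_rpoch_nat p x ltac:(lra)))].
  intros m. unfold lgamma_poch_term. rewrite Cpown_RtoC, poch_RtoC, RtoC_div; [reflexivity|].
  apply Rgt_not_eq, rpoch_pos, Hx. }
pose proof (is_series_F22 _ _ (slit_plane_off_nonpos_integers _ Hslit) HT) as HF.
apply is_series_C_iff in HF as [HF _].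
replace (2 * (x + 1) / x ^ 2 * (1 + x - INR (Factorial.fact p) / x ^ p *
           (exp x - sum_f_R0 (fun k => x ^ k / INR (Factorial.fact k)) p)))
  with (Re (RtoC 2 * (RtoC x + 1) / (RtoC x * RtoC x) * (1 + RtoC x - RtoC x * RtoC T))%C).
- eapply is_series_ext_R; [|exact HF]. intros k.
  rewrite <- RtoC_plus, F22_term_RtoC; [reflexivity | |]; apply Rgt_not_eq, rpoch_pos; lra.
- rewrite <- (RtoC_plus x 1), <- (RtoC_plus 1 x), <- (RtoC_mult x T), <- RtoC_minus, <- !RtoC_mult.
  rewrite <- RtoC_div, <- RtoC_mult by (apply Rgt_not_eq, Rmult_lt_0_compat; lra).
  simpl Re. unfold T. change (x ^ S p) with (x * x ^ p).
  pose proof (pow_nonzero x p ltac:(lra)). field. lra.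
Qed.

Theorem lemma2p3 :
  (forall z : C, in_slit_plane z ->
     exists g : C, is_lower_gamma z z g /\
       is_series (F22_term 1%C 1%C (RtoC 3) (z + RtoC 2)%C z)
         (RtoC 2 * (z + 1) / (z * z)
            * (1 + z - g / (Cpowc z (z - 1) * Cexp (- z))))%C)
  /\
  (forall n : nat, (1 <= n)%nat ->
     is_series (F22_term_R 1 1 3 (INR n + 2) (INR n))
       (2 * (INR n + 1) / (INR n ^ 2)
          * (1 + INR n - INR (Factorial.fact (n - 1)) / (INR n ^ (n - 1))
               * (exp (INR n) - sum_f_R0 (fun k => INR n ^ k / INR (Factorial.fact k)) (n - 1))))).
Proof. split; [exact F22_slit_plane | exact F22_nat]. Qed.
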